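(* Let $n\ge1$, $\beta\in\mathbb C\setminus\{0\}$. (i) The assignment $\tilde T_{ij}(u)\mapsto\delta_{ij}+E_{ij}\,\frac{1}{u+\beta/u}$ (with $\frac1{u+\beta/u}$ expanded in powers of $u^{-1}$, and the map defined by comparing coefficients of $u^{-r}$) defines a surjective algebra homomorphism $OY_\beta(\mathfrak{gl}_n)\to U(\mathfrak{gl}_n)$, and the assignment $E_{ij}\mapsto\tilde t^{(1)}_{ij}$ defines an embedding $U(\mathfrak{gl}_n)\to OY_\beta(\mathfrak{gl}_n)$. (ii) The assignment $\tilde T_{ij}(u)\mapsto T_{ij}(u+\beta/u)$ defines a homomorphism $OY_\beta(\mathfrak{gl}_n)[u^{-1}]\to Y(\mathfrak{gl}_n)[u^{-1}]$. (iii) For any $f(u)=1+\sum_{k\ge1}f_ku^{-k}\in\mathbb C[[u^{-1}]]$ and any invertible $B\in GL_n(\mathbb C)$, the maps (a) $\tilde T(u)\mapsto f(u)\tilde T(u)$ and (b) $\tilde T(u)\mapsto B\tilde T(u)B^{-1}$ define automorphisms of $OY_\beta(\mathfrak{gl}_n)$.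
   Context: $OY_\beta(\mathfrak{gl}_n)$ is the unital associative $\mathbb C$-algebra with generators $\tilde t^{(r)}_{ij}$ ($1\le i,j\le n$, $r\ge1$) subject to the relations $\left(u+\frac\beta u-v-\frac\beta v\right)[\tilde T_{ij}(u),\tilde T_{kl}(v)]=\tilde T_{kj}(u)\tilde T_{il}(v)-\tilde T_{kj}(v)\tilde T_{il}(u)$ for all $i,j,k,l$, where $\tilde T_{ij}(u)=\delta_{ij}+\sum_{r\ge1}\tilde t^{(r)}_{ij}u^{-r}$ and $\tilde T(u)=(\tilde T_{ij}(u))_{i,j}$ (equivalently, $[\tilde t^{(r+1)}_{ij}+\beta\tilde t^{(r-1)}_{ij},\tilde t^{(s)}_{kl}]-[\tilde t^{(r)}_{ij},\tilde t^{(s+1)}_{kl}+\beta\tilde t^{(s-1)}_{kl}]=\tilde t^{(r)}_{kj}\tilde t^{(s)}_{il}-\tilde t^{(s)}_{kj}\tilde t^{(r)}_{il}$ for $r,s\ge0$ with $\tilde t^{(0)}_{ij}=\delta_{ij}$, $\tilde t^{(-1)}_{ij}=0$). $E_{ij}$ are the standard matrix units spanning $\mathfrak{gl}_n$. $Y(\mathfrak{gl}_n)$ is the Yangian with generators $t^{(r)}_{ij}$ and relations $[t^{(r+1)}_{ij},t^{(s)}_{kl}]-[t^{(r)}_{ij},t^{(s+1)}_{kl}]=t^{(r)}_{kj}t^{(s)}_{il}-t^{(s)}_{kj}t^{(r)}_{il}$ ($r,s\ge0$, $t^{(0)}_{ij}=\delta_{ij}$), and $T_{ij}(w)=\sum_{r\ge0}t^{(r)}_{ij}w^{-r}$;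 $T_{ij}(u+\beta/u)$ is expanded in powers of $u^{-1}$. *)

From mathcomp Require Import all_boot all_algebra.
From mathcomp Require Import complex.
From mathcomp Require Import Rstruct.
Set Implicit Arguments. Unset Strict Implicit. Unset Printing Implicit Defensive.
Import GRing.Theory.
Local Open Scope ring_scope.

Definition CC : Type := complex Rdefinitions.R.

Definition comm (A : algType CC) (a b : A) : A := a * b - b * a.

(* [presents rel A g]: the algebra A together with the family of generators
   g : G -> A is THE algebra presented by generators G and relations [rel]:
   the generators satisfy the relations, and for every algebra B and every
   family h : G -> B satisfying the relations there is a unique algebra
   homomorphism A -> B sending g x to h x (universal property). *)
Definition presents (G : Type) (rel : forall B : algType CC, (G -> B) -> Prop)
  (A : algType CC) (g : G -> A) : Prop :=
  rel A g /\
  forall (B : algType CC) (h : G -> B), rel B h ->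
    exists f : {lrmorphism A -> B},
      (forall x, f (g x) = h x) /\
      (forall f' : {lrmorphism A -> B}, (forall x, f' (g x) = h x) -> f' =1 f).

(* Generators of OY / Y: the generator t (i, j, r) stands for t^{(r+1)}_{ij}
   (r : nat, so that r+1 >= 1 ranges over all positive superscripts). *)
Definition gen_t (n : nat) := ('I_n * 'I_n * nat)%type.

(* [ext t i j m] = t^{(m)}_{ij} with the convention t^{(0)}_{ij} = delta_ij. *)
Definition ext n (A : algType CC) (t : gen_t n -> A) (i j : 'I_n) (m : nat) : A :=
  if m is m'.+1 then t (i, j, m') else (i == j)%:R.

(* [extm1 t i j m] = t^{(m-1)}_{ij} with t^{(-1)} = 0. *)
Definition extm1 n (A : algType CC) (t : gen_t n -> A) (i j : 'I_n) (m : nat) : A :=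
  if m is m'.+1 then ext t i j m' else 0.

Definition OY_rel n (beta : CC) (A : algType CC) (t : gen_t n -> A) : Prop :=
  forall (i j k l : 'I_n) (r s : nat),
    comm (ext t i j r.+1 + beta *: extm1 t i j r) (ext t k l s)
    - comm (ext t i j r) (ext t k l s.+1 + beta *: extm1 t k l s)
    = ext t k j r * ext t i l s - ext t k j s * ext t i l r.

Definition Y_rel n (A : algType CC) (t : gen_t n -> A) : Prop :=
  forall (i j k l : 'I_n) (r s : nat),
    comm (ext t i j r.+1) (ext t k l s) - comm (ext t i j r) (ext t k l s.+1)
    = ext t k j r * ext t i l s - ext t k j s * ext t i l r.

Definition U_rel n (A : algType CC) (E : 'I_n * 'I_n -> A) : Prop :=
  forall i j k l : 'I_n,
    comm (E (i, j)) (E (k, l)) = (k == j)%:R * E (i, l) - (i == l)%:R * E (k, j).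

Definition is_OY n (beta : CC) (A : algType CC) (t : gen_t n -> A) : Prop :=
  presents (@OY_rel n beta) t.
Definition is_Yangian n (A : algType CC) (t : gen_t n -> A) : Prop :=
  presents (@Y_rel n) t.
Definition is_Ugl n (A : algType CC) (E : 'I_n * 'I_n -> A) : Prop :=
  presents (@U_rel n) E.

(* Coefficient of u^{-m} in 1/(u + beta/u) = sum_k (-beta)^k u^{-2k-1}. *)
Definition inv_coef (beta : CC) (m : nat) : CC :=
  if odd m then (- beta) ^+ m./2 else 0.

(* Coefficient of u^{-m} in T_ij(u + beta/u) = sum_r t^{(r)}_ij (u+beta/u)^{-r},
   using (u + beta/u)^{-r} = sum_k (-1)^k binom(r+k-1,k) beta^k u^{-r-2k}
   (for r = 0 this gives the constant 1, as binom(k-1,k) = 0 for k >= 1). *)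
Definition Yexp n (beta : CC) (A : algType CC) (t : gen_t n -> A)
  (i j : 'I_n) (m : nat) : A :=
  \sum_(k < m.+1) \sum_(r < m.+1 | (r + k.*2 == m)%N)
     ((-1) ^+ k * ('C(r + k - 1, k))%:R * beta ^+ k) *: ext t i j r.

(* Coefficient of u^{-m} in f(u) T_ij(u), f(u) = sum_k f_k u^{-k} (f_0 = 1). *)
Definition fmul n (A : algType CC) (t : gen_t n -> A) (f : nat -> CC)
  (i j : 'I_n) (m : nat) : A :=
  \sum_(k < m.+1) f k *: ext t i j (m - k).

Definition conjT n (A : algType CC) (t : gen_t n -> A) (B : 'M[CC]_n)
  (i j : 'I_n) (m : nat) : A :=
  \sum_(a < n) \sum_(b < n) (B i a * invmx B b j) *: ext t a b m.

(* All five maps come from the universal property of the presentations, so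
   the work is to check the defining relations on the images of generators.
   Writing [raise b X] for the coefficients of [(u + b/u) X(u)], the relations
   of OY_beta say [[raise beta T_ij (r), T_kl (s)] - [T_ij (r), raise beta T_kl (s)]
   = T_kj (r) T_il (s) - T_kj (s) T_il (r)], and for beta = 0 they are those of
   the Yangian.  A lower-triangular change of coefficients
   [T'(m) = \sum_p K(p, m) T(p)] whose kernel intertwines [raise bt] with
   [raise bs], up to the central degree-0 coefficient, maps solutions for [bs]
   to solutions for [bt].  The substitution [u -> u + beta/u] is such a kernel
   from 0 to beta; applied to the Yangian, and to its evaluation family
   [1 + E u^-1] in U(gl_n), it gives (ii) and (i).  Multiplication by [f(u)] is
   one from beta to beta, and conjugation by [B] only mixes matrix indices;
   these are inverted by [f^-1] and [B^-1].  Finally the [t^(1)_ij] satisfy the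
   gl_n relations, and the resulting map U(gl_n) -> OY is a section of the
   evaluation map, hence injective. *)

From mathcomp Require Import all_boot all_algebra.
From mathcomp Require Import complex Rstruct.
From mathcomp Require Import zify ring.
From Stdlib Require Import FunctionalExtensionality.
Import GRing.Theory.
Local Open Scope ring_scope.
Set Implicit Arguments. Unset Strict Implicit. Unset Printing Implicit Defensive.

Section Presentations.
Variables (G : Type) (rel : forall B : algType CC, (G -> B) -> Prop).
Variables (A : algType CC) (g : G -> A).
Hypothesis presA : presents rel g.

Lemma presents_lift (B : algType CC) (h : G -> B) :
  rel h -> exists f : {lrmorphism A -> B}, forall x, f (g x) = h x.
Proof. by move=> relh; have [f [fg _]] := presA.2 B h relh; exists f. Qed.

Lemma presents_endo_id (a : {lrmorphism A -> A}) :
  (forall x, a (g x) = g x) -> forall y, a y = y.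
Proof.
move=> ag y; have [f [_ uniq_f]] := presA.2 A g presA.1.
by rewrite (uniq_f a ag) -(uniq_f idfun (fun=> erefl)).
Qed.

Lemma presents_bijective (a a' : {lrmorphism A -> A}) :
  (forall x, a (a' (g x)) = g x) -> (forall x, a' (a (g x)) = g x) -> bijective a.
Proof.
move=> aa' a'a; exists a'.
- exact: (presents_endo_id (a := a' \o a) a'a).
- exact: (presents_endo_id (a := a \o a') aa').
Qed.

End Presentations.

Section Commutator.
Variable A : algType CC.
Implicit Types x y z : A.

Lemma commDl x y z : comm (x + y) z = comm x z + comm y z.
Proof. by rewrite /comm mulrDl mulrDr addrACA opprD. Qed.

Lemma commDr x y z : comm z (x + y) = comm z x + comm z y.
Proof. by rewrite /comm mulrDl mulrDr addrACA opprD. Qed.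

Lemma commZl c x z : comm (c *: x) z = c *: comm x z.
Proof. by rewrite /comm scalerBr -scalerAl -scalerAr. Qed.

Lemma commZr c x z : comm z (c *: x) = c *: comm z x.
Proof. by rewrite /comm scalerBr -scalerAl -scalerAr. Qed.

Lemma comm0l z : comm 0 z = 0.
Proof. by rewrite /comm mul0r mulr0 subrr. Qed.

Lemma comm0r z : comm z 0 = 0.
Proof. by rewrite /comm mul0r mulr0 subrr. Qed.

Lemma comm_natl (m : nat) z : comm m%:R z = 0.
Proof. by rewrite /comm mulr_natl mulr_natr subrr. Qed.

Lemma comm_natr (m : nat) z : comm z m%:R = 0.
Proof. by rewrite /comm mulr_natl mulr_natr subrr. Qed.

Lemma mulr_sumZ (I J : Type) (r : seq I) (s : seq J) (a : I -> CC) (b : J -> CC)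
    (X : I -> A) (Y : J -> A) :
  (\sum_(i <- r) a i *: X i) * (\sum_(j <- s) b j *: Y j)
  = \sum_(i <- r) \sum_(j <- s) (a i * b j) *: (X i * Y j).
Proof.
rewrite mulr_suml; apply: eq_bigr => i _; rewrite mulr_sumr; apply: eq_bigr => j _.
by rewrite -scalerAl -scalerAr scalerA.
Qed.

Lemma comm_sumZ (I J : Type) (r : seq I) (s : seq J) (a : I -> CC) (b : J -> CC)
    (X : I -> A) (Y : J -> A) :
  comm (\sum_(i <- r) a i *: X i) (\sum_(j <- s) b j *: Y j)
  = \sum_(i <- r) \sum_(j <- s) (a i * b j) *: comm (X i) (Y j).
Proof.
rewrite /comm !mulr_sumZ [X in _ - X]exchange_big -sumrB; apply: eq_bigr => i _.
by rewrite -sumrB; apply: eq_bigr => j _; rewrite scalerBr mulrC.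
Qed.

End Commutator.

Definition lag (V : nmodType) (F : nat -> V) (m : nat) : V :=
  if m is m'.+1 then F m' else 0.

Definition raise (V : lmodType CC) (b : CC) (F : nat -> V) (m : nat) : V :=
  F m.+1 + b *: lag F m.

Definition OY_coef_rel n (b : CC) (A : algType CC) (T : 'I_n -> 'I_n -> nat -> A) :=
  forall (i j k l : 'I_n) (r s : nat),
    comm (raise b (T i j) r) (T k l s) - comm (T i j r) (raise b (T k l) s)
    = T k j r * T i l s - T k j s * T i l r.

Lemma Y_rel_OY_coef_rel0 n (A : algType CC) (t : gen_t n -> A) :
  Y_rel t -> OY_coef_rel 0 (ext t).
Proof. by move=> relt i j k l r s; rewrite /raise !scale0r !addr0. Qed.

(* [kmap K F] is [F(u) -> \sum_p F(p) K_p(u)] with [K_p(u) = \sum_m K p m u^-m]. *)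
Definition kmap (V : lmodType CC) (K : nat -> nat -> CC) (F : nat -> V) (m : nat) : V :=
  \sum_(0 <= p < m.+1) K p m *: F p.

Lemma big_nat_widen0 (V : nmodType) (F : nat -> V) a b :
  (a <= b)%N -> (forall p, (a <= p)%N -> F p = 0) ->
  \sum_(0 <= p < b) F p = \sum_(0 <= p < a) F p.
Proof.
move=> le_ab F0; rewrite (big_cat_nat (leq0n a) le_ab) /=.
rewrite [X in _ + X]big1_seq ?addr0 // => p /andP[_].
by rewrite mem_index_iota => /andP[/F0].
Qed.

Section KernelMaps.
Variable K : nat -> nat -> CC.
Implicit Types V W : lmodType CC.

Lemma kmap0 V (F : nat -> V) : kmap K F 0 = K 0%N 0%N *: F 0%N.
Proof. exact: big_nat1. Qed.

Lemma linear_kmap V W (f : {linear V -> W}) (F : nat -> V) (G : nat -> W) m :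
  (forall p, f (F p) = G p) -> f (kmap K F m) = kmap K G m.
Proof. by move=> fFG; rewrite linear_sum; apply: eq_bigr => p _; rewrite linearZ fFG. Qed.

Hypothesis K_triangular : forall p m, (m < p)%N -> K p m = 0.

Lemma kmap_widen V (F : nat -> V) m N :
  (m < N)%N -> kmap K F m = \sum_(0 <= p < N) K p m *: F p.
Proof.
move=> lt_mN; rewrite [RHS](big_nat_widen0 lt_mN) // => p /K_triangular->.
by rewrite scale0r.
Qed.

Lemma lag_kmap V (F : nat -> V) m :
  lag (kmap K F) m = \sum_(0 <= p < m.+2) lag (K p) m *: F p.
Proof.
case: m => [|m] /=; first by rewrite big1 // => p _; rewrite scale0r.
exact: (kmap_widen _ (leqW (leqW (ltnSn m)))).
Qed.

Lemma kmap_comp V (L : nat -> nat -> CC) (F : nat -> V) m :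
  kmap L (kmap K F) m
  = \sum_(0 <= p < m.+1) (\sum_(0 <= q < m.+1) L q m * K p q) *: F p.
Proof.
transitivity (\sum_(0 <= q < m.+1) \sum_(0 <= p < m.+1) (L q m * K p q) *: F p).
  apply: eq_big_nat => q /andP[_ lt_qm].
  by rewrite (kmap_widen _ lt_qm) scaler_sumr; apply: eq_bigr => p _; rewrite scalerA.
by rewrite exchange_big; apply: eq_bigr => p _; rewrite scaler_suml.
Qed.

Variables bs bt : CC.
(* [(u + bt/u) K_(p+1)(u) = K_p(u) + bs K_(p+2)(u)] *)
Hypothesis K_shift :
  forall p m, K p.+1 m.+1 + bt * lag (K p.+1) m = K p m + bs * K p.+2 m.

Lemma kmap_raise V (F : nat -> V) m :
  exists c, raise bt (kmap K F) m = kmap K (raise bs F) m + c *: F 0%N.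
Proof.
exists (K 0%N m.+1 + bt * lag (K 0%N) m - bs * K 1%N m).
have -> : raise bt (kmap K F) m
          = \sum_(0 <= p < m.+2) (K p m.+1 + bt * lag (K p) m) *: F p.
  rewrite /raise lag_kmap /kmap scaler_sumr -big_split; apply: eq_bigr => p _.
  by rewrite scalerDl scalerA.
have shiftF : \sum_(0 <= p < m.+1) K p m *: F p.+1
               = \sum_(0 <= p < m.+2) lag (K ^~ m) p *: F p.
  by rewrite [RHS]big_nat_recl //= scale0r add0r.
have lagF : \sum_(0 <= p < m.+1) K p m *: lag F p
            = \sum_(0 <= p < m.+2) K p.+1 m *: F p.
  rewrite big_nat_recl // scaler0 add0r [RHS](big_nat_widen0 (leqW (leqnSn m))) //.
  by move=> p le_mp; rewrite K_triangular ?scale0r.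
have -> : kmap K (raise bs F) m
          = \sum_(0 <= p < m.+2) (lag (K ^~ m) p + bs * K p.+1 m) *: F p.
  rewrite /kmap /raise.
  under eq_bigr do rewrite scalerDr scalerA mulrC -scalerA.
  rewrite big_split /= -scaler_sumr shiftF lagF scaler_sumr -big_split.
  by apply: eq_bigr => p _; rewrite scalerDl scalerA.
rewrite big_nat_recl // [in RHS]big_nat_recl //; under eq_bigr do rewrite K_shift.
rewrite addrAC -scalerDl; congr (_ *: _ + _).
by rewrite /= add0r [RHS]addrC subrK.
Qed.

Lemma OY_coef_rel_kmap n (A : algType CC) (T : 'I_n -> 'I_n -> nat -> A) :
  (forall i j, T i j 0%N = (i == j)%:R) ->
  OY_coef_rel bs T -> OY_coef_rel bt (fun i j => kmap K (T i j)).
Proof.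
move=> T0 relT i j k l r s.
have [c ->] := kmap_raise (T i j) r; have [c' ->] := kmap_raise (T k l) s.
rewrite commDl commDr !T0 commZl commZr comm_natl comm_natr !scaler0 !addr0.
rewrite /kmap !comm_sumZ -sumrB !mulr_sumZ [X in _ = _ - X]exchange_big -sumrB /=.
apply: eq_bigr => p _; rewrite -!sumrB; apply: eq_bigr => q _.
by rewrite -scalerBr relT [K q s * _]mulrC scalerBr.
Qed.

End KernelMaps.

(* The coefficient of [u^-m] in [f(u) u^-p]. *)
Definition mul_coef (f : nat -> CC) (p m : nat) : CC :=
  if (p <= m)%N then f (m - p)%N else 0.

Lemma mul_coef_triangular f p m : (m < p)%N -> mul_coef f p m = 0.
Proof. by rewrite /mul_coef ltnNge => /negbTE->. Qed.

Lemma mul_coef_shift f b p m :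
  mul_coef f p.+1 m.+1 + b * lag (mul_coef f p.+1) m
  = mul_coef f p m + b * mul_coef f p.+2 m.
Proof. by case: m => [|m]. Qed.

Lemma fmul_kmap n (A : algType CC) (t : gen_t n -> A) f i j m :
  fmul t f i j m = kmap (mul_coef f) (ext t i j) m.
Proof.
rewrite /fmul /kmap big_mkord (reindex_inj rev_ord_inj) /=.
apply: eq_bigr => p _; have le_pm : (p <= m)%N := ltn_ord p.
by rewrite /mul_coef subSS le_pm subKn.
Qed.

Definition conv (f g : nat -> CC) (d : nat) : CC := \sum_(0 <= c < d.+1) f c * g (d - c)%N.

Lemma convC f g : conv f g =1 conv g f.
Proof.
move=> d; rewrite /conv big_nat_rev; apply: eq_big_nat => c /andP[_ lt_cd].
by rewrite add0n subSS subKn // mulrC.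
Qed.

Lemma mul_coef_comp f g p m :
  \sum_(0 <= q < m.+1) mul_coef g q m * mul_coef f p q = mul_coef (conv f g) p m.
Proof.
rewrite /mul_coef; case: leqP => [le_pm|lt_mp]; last first.
  rewrite big1_seq // => q /andP[_]; rewrite mem_index_iota => /andP[_ lt_qm].
  by rewrite [X in _ * X]ifN ?mulr0 //; lia.
rewrite (big_cat_nat (leq0n p) (leqW le_pm)) /= big1_seq ?add0r; last first.
  move=> q /andP[_]; rewrite mem_index_iota => /andP[_ lt_qp].
  by rewrite [X in _ * X]ifN ?mulr0 //; lia.
rewrite -{1}(add0n p) big_addn /conv subSn //; apply: eq_big_nat => c /andP[_ lt_c].
rewrite leq_addl addnK ifT; last by lia.
by rewrite mulrC subnDA subnAC.
Qed.

Lemma kmap_mul_coef_conv (V : lmodType CC) f g (F : nat -> V) m :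
  kmap (mul_coef g) (kmap (mul_coef f) F) m = kmap (mul_coef (conv f g)) F m.
Proof.
rewrite (kmap_comp (@mul_coef_triangular f)).
by apply: eq_bigr => p _; rewrite mul_coef_comp.
Qed.

Lemma kmap_mul_coef1 (V : lmodType CC) h (F : nat -> V) m :
  h =1 (fun d => (d == 0%N)%:R) -> kmap (mul_coef h) F m = F m.
Proof.
move=> h1; rewrite /kmap big_nat_recr //= /mul_coef leqnn subnn h1 scale1r.
rewrite big1_seq ?add0r // => p /andP[_]; rewrite mem_index_iota => /andP[_ lt_pm].
by rewrite ltnW // h1 subn_eq0 leqNgt lt_pm scale0r.
Qed.

(* The inverse series: [g_0 = 1] and [g_m = - \sum_(1 <= k <= m) f_k g_(m-k)];
   computing [g_m] needs recursion depth [m], supplied as fuel. *)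
Fixpoint series_inv_rec (f : nat -> CC) (fuel m : nat) : CC :=
  if fuel is fuel'.+1 then
    if m is m'.+1 then - \sum_(0 <= k < m) f k.+1 * series_inv_rec f fuel' (m' - k)%N
    else 1
  else 1.

Definition series_inv f m := series_inv_rec f m m.

Lemma series_inv_rec_fuel f fuel1 fuel2 m :
  (m <= fuel1)%N -> (m <= fuel2)%N -> series_inv_rec f fuel1 m = series_inv_rec f fuel2 m.
Proof.
elim: fuel1 fuel2 m => [|fuel1 IH] [|fuel2] [|m] //= le1 le2.
by congr (- _); apply: eq_big_nat => k lt_km; congr (_ * _); apply: IH; lia.
Qed.

Lemma conv_series_inv f : f 0%N = 1 -> conv f (series_inv f) =1 (fun d => (d == 0%N)%:R).
Proof.
move=> f0 [|d]; first by rewrite /conv big_nat1 f0 mulr1.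
rewrite /conv big_nat_recl // f0 mul1r subn0 /series_inv /= addrC.
apply/eqP; rewrite subr_eq0; apply/eqP; apply: eq_big_nat => k lt_kd.
by rewrite subSS; congr (_ * _); apply: series_inv_rec_fuel; lia.
Qed.

Definition negbin_coef (beta : CC) (r k : nat) : CC :=
  (-1) ^+ k * ('C(r + k - 1, k))%:R * beta ^+ k.

(* The coefficient of [u^-m] in [(u + beta/u)^-r = u^-r (1 + beta u^-2)^-r]. *)
Definition subst_coef (beta : CC) (r m : nat) : CC :=
  if (r <= m)%N && ~~ odd (m - r) then negbin_coef beta r (m - r)%N./2 else 0.

Lemma subst_coef_triangular beta r m : (m < r)%N -> subst_coef beta r m = 0.
Proof. by rewrite /subst_coef ltnNge => /negbTE->. Qed.

Lemma subst_coef_even beta r k : subst_coef beta r (r + k.*2) = negbin_coef beta r k.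
Proof. by rewrite /subst_coef leq_addr addKn odd_double doubleK. Qed.

Lemma subst_coef_odd beta r k : subst_coef beta r (r + k.*2.+1) = 0.
Proof. by rewrite /subst_coef leq_addr addKn /= odd_double. Qed.

Lemma ltn_or_parity r m :
  [\/ (m < r)%N, exists k, (m = r + k.*2)%N | exists k, (m = r + k.*2.+1)%N].
Proof.
case: (ltnP m r) => [|le_rm]; first by constructor 1.
have := odd_double_half (m - r); case: (odd _) => /= mE.
  by constructor 3; exists (m - r)./2; lia.
by constructor 2; exists (m - r)./2; lia.
Qed.

(* Coefficientwise form of [(u + beta/u) (u + beta/u)^-(p+1) = (u + beta/u)^-p]. *)
Lemma subst_coef_shift beta p m :
  subst_coef beta p.+1 m.+1 + beta * lag (subst_coef beta p.+1) m = subst_coef beta p m.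
Proof.
have [lt_mp|[k ->]|[k ->]] := ltn_or_parity p m.
- rewrite !subst_coef_triangular //; case: m lt_mp => [|m] lt_mp /=.
    by rewrite mulr0 addr0.
  by rewrite subst_coef_triangular ?mulr0 ?addr0 //; lia.
- rewrite [RHS]subst_coef_even -addSn subst_coef_even; case: k => [|k].
    rewrite /negbin_coef !expr0 !mul1r !addn0 !bin0.
    case: p => [|p] /=; first by rewrite mulr0 addr0.
    by rewrite subst_coef_triangular ?mulr0 ?addr0.
  have -> : (p + k.+1.*2 = (p.+1 + k.*2).+1)%N by lia.
  rewrite /= subst_coef_even /negbin_coef.
  have -> : (p.+1 + k.+1 - 1 = (p + k).+1)%N by lia.
  have -> : (p.+1 + k - 1 = p + k)%N by lia.
  have -> : (p + k.+1 - 1 = p + k)%N by lia.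
  by rewrite binS natrD !exprS; ring.
- rewrite [RHS]subst_coef_odd -addSn subst_coef_odd add0r addnS /=.
  case: k => [|k]; first by rewrite addn0 subst_coef_triangular ?mulr0.
  have -> : (p + k.+1.*2 = p.+1 + k.*2.+1)%N by lia.
  by rewrite subst_coef_odd mulr0.
Qed.

Lemma Yexp_kmap n beta (A : algType CC) (t : gen_t n -> A) i j m :
  Yexp beta t i j m = kmap (subst_coef beta) (ext t i j) m.
Proof.
rewrite /Yexp /kmap big_mkord; under eq_bigr do rewrite big_mkcond.
rewrite exchange_big /=; apply: eq_bigr => r _; move: (nat_of_ord r) (ext t i j r) => {}r X.
have [lt_mr|[k mE]|[k mE]] := ltn_or_parity r m.
- rewrite subst_coef_triangular // scale0r big1 // => k _.
  by rewrite ifF //; apply/negbTE; lia.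
- have lt_km : (k < m.+1)%N by lia.
  rewrite (bigD1 (Ordinal lt_km)) //= ifT; last by apply/eqP; lia.
  rewrite big1 ?addr0; first by rewrite mE subst_coef_even.
  move=> k' /negP nk'; rewrite ifF //; apply/negP => /eqP e; apply: nk'.
  by apply/eqP/val_inj => /=; lia.
- rewrite mE subst_coef_odd scale0r big1 // => k' _.
  by rewrite ifF //; apply/negbTE; lia.
Qed.

Lemma kmap_subst_coef0 (V : lmodType CC) beta (F : nat -> V) :
  kmap (subst_coef beta) F 0%N = F 0%N.
Proof. by rewrite kmap0 /subst_coef /= /negbin_coef !expr0 !mul1r scale1r. Qed.

Definition eval_gens n (U : algType CC) (E : 'I_n * 'I_n -> U) (x : gen_t n) : U :=
  if x.2 is 0%N then E x.1 else 0.

Lemma OY_coef_rel_eval n (U : algType CC) (E : 'I_n * 'I_n -> U) :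
  U_rel E -> OY_coef_rel 0 (ext (eval_gens E)).
Proof.
move=> relE i j k l r s; rewrite /raise !scale0r !addr0.
case: r => [|[|r]]; case: s => [|[|s]] /=;
  rewrite ?comm_natl ?comm_natr ?comm0l ?comm0r ?mul0r ?mulr0 ?subrr ?sub0r ?subr0 //.
- by rewrite relE !mulr_natl !mulr_natr.
- by rewrite relE opprB !mulr_natl !mulr_natr.
Qed.

Lemma kmap_subst_eval n (U : algType CC) (E : 'I_n * 'I_n -> U) beta i j m :
  kmap (subst_coef beta) (ext (eval_gens E) i j) m.+1 = inv_coef beta m.+1 *: E (i, j).
Proof.
have coef0 : subst_coef beta 0 m.+1 = 0.
  have [//|[k mE]|[k ->]] := ltn_or_parity 0 m.+1; last exact: subst_coef_odd.
  rewrite mE subst_coef_even /negbin_coef; case: k mE => [//|k] _.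
  rewrite bin_small; last by lia.
  by rewrite mulr0 mul0r.
have coef1 : subst_coef beta 1 m.+1 = inv_coef beta m.+1.
  have [//|[k ->]|[k ->]] := ltn_or_parity 1 m.+1; last first.
    by rewrite subst_coef_odd /inv_coef /= odd_double.
  rewrite subst_coef_even /negbin_coef /inv_coef /= odd_double uphalf_double.
  by rewrite add1n subn1 binn mulr1 -exprMn mulN1r.
rewrite /kmap big_nat_recl // big_nat_recl // big1 => [|p _]; last by rewrite scaler0.
by rewrite /= coef0 coef1 scale0r add0r addr0.
Qed.

Lemma OY_rel_U_rel n beta (A : algType CC) (t : gen_t n -> A) :
  OY_rel beta t -> U_rel (fun x => t (x.1, x.2, 0%N)).
Proof.
move=> relt i j k l /=.
have := relt i j k l 1%N 0%N; rewrite /= comm_natr scaler0 addr0 sub0r => rel10.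
by rewrite -[LHS]opprK rel10 opprB !mulr_natl !mulr_natr.
Qed.

Definition conj_fam n (A : lmodType CC) (P Q : 'M[CC]_n) (T : 'I_n -> 'I_n -> nat -> A)
    (i j : 'I_n) (m : nat) : A :=
  \sum_(a < n) \sum_(c < n) (P i a * Q c j) *: T a c m.

Section ConjugateFamilies.
Variable n : nat.
Implicit Types (P Q : 'M[CC]_n).

Lemma linear_conj_fam (V W : lmodType CC) (f : {linear V -> W}) P Q
    (T : 'I_n -> 'I_n -> nat -> V) (T' : 'I_n -> 'I_n -> nat -> W) i j m :
  (forall a c, f (T a c m) = T' a c m) ->
  f (conj_fam P Q T i j m) = conj_fam P Q T' i j m.
Proof.
move=> fTT'; rewrite linear_sum; apply: eq_bigr => a _.
by rewrite linear_sum; apply: eq_bigr => c _; rewrite linearZ fTT'.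
Qed.

Lemma raise_conj_fam (V : lmodType CC) b P Q (T : 'I_n -> 'I_n -> nat -> V) i j m :
  raise b (conj_fam P Q T i j) m = conj_fam P Q (fun a c => raise b (T a c)) i j m.
Proof.
have lagE : lag (conj_fam P Q T i j) m = conj_fam P Q (fun a c => lag (T a c)) i j m.
  case: m => [|m] //=; rewrite /conj_fam big1 // => a _.
  by rewrite big1 // => c _; rewrite scaler0.
rewrite /raise lagE /conj_fam scaler_sumr -big_split; apply: eq_bigr => a _ /=.
rewrite scaler_sumr -big_split; apply: eq_bigr => c _ /=.
by rewrite scalerDr !scalerA [b * _]mulrC.
Qed.

Lemma sum_swap_pairs (V : nmodType) (F : 'I_n * 'I_n -> 'I_n * 'I_n -> V) :
  \sum_x \sum_y F x y = \sum_x \sum_y F (y.1, x.2) (x.1, y.2).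
Proof.
pose h (p : ('I_n * 'I_n) * ('I_n * 'I_n)) := ((p.2.1, p.1.2), (p.1.1, p.2.2)).
rewrite !pair_big (reindex_inj (h := h)) //.
by apply: (can_inj (g := h)) => -[[? ?] [? ?]].
Qed.

Lemma OY_coef_rel_conj (A : algType CC) b P Q (T : 'I_n -> 'I_n -> nat -> A) :
  OY_coef_rel b T -> OY_coef_rel b (conj_fam P Q T).
Proof.
move=> relT i j k l r s.
rewrite !raise_conj_fam /conj_fam !pair_big /= !comm_sumZ !mulr_sumZ -!sumrB.
under [RHS]eq_bigr do rewrite -sumrB.
rewrite [RHS]sum_swap_pairs; apply: eq_bigr => x _; rewrite -sumrB.
apply: eq_bigr => y _; rewrite -!scalerBr relT /=.
by congr (_ *: _); ring.
Qed.

Lemma conj_fam_delta (A : algType CC) P Q (T : 'I_n -> 'I_n -> nat -> A) i j m :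
  (forall a c, T a c m = (a == c)%:R) -> P *m Q = 1%:M ->
  conj_fam P Q T i j m = (i == j)%:R.
Proof.
move=> Tm PQ; transitivity (\sum_(a < n) (P i a * Q a j) *: (1 : A)).
  apply: eq_bigr => a _; rewrite (bigD1 a) //= Tm eqxx big1 ?addr0 // => c ca.
  by rewrite Tm eq_sym (negbTE ca) scaler0.
have := congr1 (fun M : 'M[CC]_n => M i j) PQ; rewrite !mxE => PQij.
by rewrite -scaler_suml PQij scaler_nat.
Qed.

Lemma conj_fam1 (V : lmodType CC) (T : 'I_n -> 'I_n -> nat -> V) i j m :
  conj_fam 1%:M 1%:M T i j m = T i j m.
Proof.
rewrite /conj_fam (bigD1 i) //= [X in _ + X]big1 ?addr0 => [|a ai]; last first.
  by apply: big1 => c _; rewrite !mxE eq_sym (negbTE ai) mul0r scale0r.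
rewrite (bigD1 j) //= [X in _ + X]big1 ?addr0 => [|c cj]; last first.
  by rewrite !mxE (negbTE cj) mulr0 scale0r.
by rewrite !mxE !eqxx mulr1 scale1r.
Qed.

Lemma conj_fam_comp (V : lmodType CC) P Q P' Q' (T : 'I_n -> 'I_n -> nat -> V) i j m :
  conj_fam P Q (conj_fam P' Q' T) i j m = conj_fam (P *m P') (Q' *m Q) T i j m.
Proof.
rewrite /conj_fam !pair_big /=.
under eq_bigr do rewrite pair_big scaler_sumr /=.
rewrite exchange_big; apply: eq_bigr => y _ /=.
under eq_bigr do rewrite scalerA.
rewrite -scaler_suml !mxE big_distrlr pair_big /=; congr (_ *: _).
by apply: eq_bigr => x _; ring.
Qed.

End ConjugateFamilies.

Section OYHomomorphisms.
Variables (n : nat) (beta : CC) (OY : algType CC) (t : gen_t n -> OY).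
Hypothesis presOY : is_OY beta t.

Lemma OY_lift (B : algType CC) (T : 'I_n -> 'I_n -> nat -> B) :
  (forall i j, T i j 0%N = (i == j)%:R) -> OY_coef_rel beta T ->
  exists f : {lrmorphism OY -> B}, forall i j m, f (ext t i j m) = T i j m.
Proof.
move=> T0 relT; pose h (x : gen_t n) := T x.1.1 x.1.2 x.2.+1.
have extE : ext h = T.
  apply: functional_extensionality => i; apply: functional_extensionality => j.
  by apply: functional_extensionality => -[|m] //=; rewrite T0.
have relh : OY_coef_rel beta (ext h) by rewrite extE.
have [f fh] := presents_lift presOY relh.
by exists f => i j [|m]; [rewrite rmorph_nat T0 | exact: fh (i, j, m)].
Qed.

Lemma subst_hom (B : algType CC) (T : 'I_n -> 'I_n -> nat -> B) :
  (forall i j, T i j 0%N = (i == j)%:R) -> OY_coef_rel 0 T ->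
  exists chi : {lrmorphism OY -> B},
    forall i j m, chi (ext t i j m) = kmap (subst_coef beta) (T i j) m.
Proof.
move=> T0 relT; apply: OY_lift => [i j|]; first by rewrite kmap_subst_coef0 T0.
apply: (OY_coef_rel_kmap _ _ T0 relT) => [p m|p m]; first exact: subst_coef_triangular.
by rewrite mul0r addr0 subst_coef_shift.
Qed.

Lemma mul_series_hom f : f 0%N = 1 ->
  exists a : {lrmorphism OY -> OY},
    forall i j m, a (ext t i j m) = kmap (mul_coef f) (ext t i j) m.
Proof.
move=> f0; apply: OY_lift => [i j|]; first by rewrite kmap0 /mul_coef subnn f0 scale1r.
exact: (OY_coef_rel_kmap (@mul_coef_triangular f) (@mul_coef_shift f beta)
          (fun i j => erefl) presOY.1).
Qed.

Lemma mul_series_homK f g (af ag : {lrmorphism OY -> OY}) :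
  conv f g =1 (fun d => (d == 0%N)%:R) ->
  (forall i j m, af (ext t i j m) = kmap (mul_coef f) (ext t i j) m) ->
  (forall i j m, ag (ext t i j m) = kmap (mul_coef g) (ext t i j) m) ->
  forall x, af (ag (t x)) = t x.
Proof.
move=> fg afE agE [[i j] r].
rewrite -[t _]/(ext t i j r.+1) agE (linear_kmap _ _ (afE i j)).
by rewrite kmap_mul_coef_conv kmap_mul_coef1.
Qed.

Lemma mul_series_automorphism f : f 0%N = 1 ->
  exists alpha : {lrmorphism OY -> OY},
    (forall i j r, alpha (t (i, j, r)) = fmul t f i j r.+1) /\ bijective alpha.
Proof.
move=> f0; have [af afE] := mul_series_hom f0.
have [ag agE] := mul_series_hom (erefl : series_inv f 0%N = 1).
exists af; split=> [i j r|]; first by rewrite fmul_kmap -afE.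
apply: (presents_bijective presOY (a' := ag)).
- exact: mul_series_homK (conv_series_inv f0) afE agE.
- by apply: mul_series_homK agE afE => d; rewrite convC conv_series_inv.
Qed.

Lemma conj_hom B : B \in unitmx ->
  exists a : {lrmorphism OY -> OY},
    forall i j m, a (ext t i j m) = conj_fam B (invmx B) (ext t) i j m.
Proof.
move=> uB; apply: OY_lift => [i j|]; last exact: OY_coef_rel_conj presOY.1.
by apply: conj_fam_delta => //; rewrite mulmxV.
Qed.

Lemma conj_homK B C (aB aC : {lrmorphism OY -> OY}) :
  C *m B = 1%:M -> invmx B *m invmx C = 1%:M ->
  (forall i j m, aB (ext t i j m) = conj_fam B (invmx B) (ext t) i j m) ->
  (forall i j m, aC (ext t i j m) = conj_fam C (invmx C) (ext t) i j m) ->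
  forall x, aB (aC (t x)) = t x.
Proof.
move=> CB BC aBE aCE [[i j] r].
rewrite -[t _]/(ext t i j r.+1) aCE (linear_conj_fam _ _ _ _ (fun a c => aBE a c r.+1)).
by rewrite conj_fam_comp CB BC conj_fam1.
Qed.

Lemma conj_automorphism B : B \in unitmx ->
  exists alpha : {lrmorphism OY -> OY},
    (forall i j r, alpha (t (i, j, r)) = conjT t B i j r.+1) /\ bijective alpha.
Proof.
move=> uB; have [aB aBE] := conj_hom uB.
have [aB' aB'E] := conj_hom (etrans (unitmx_inv B) uB).
exists aB; split=> [i j r|]; first exact: (aBE i j r.+1).
apply: (presents_bijective presOY (a' := aB')).
- by apply: conj_homK aBE aB'E; rewrite ?invmxK mulVmx.
- by apply: conj_homK aB'E aBE; rewrite ?invmxK mulmxV.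
Qed.

End OYHomomorphisms.

Theorem mainTheorem7 (n : nat) (hn : (0 < n)%N) (beta : CC) (hbeta : beta != 0)
  (OY : algType CC) (tOY : gen_t n -> OY) (HOY : is_OY beta tOY)
  (U : algType CC) (E : 'I_n * 'I_n -> U) (HU : is_Ugl E)
  (Y : algType CC) (ty : gen_t n -> Y) (HY : is_Yangian ty) :
  (* (i) evaluation homomorphism OY -> U(gl_n), surjective *)
  (exists phi : {lrmorphism OY -> U},
      (forall (i j : 'I_n) (r : nat),
          phi (tOY (i, j, r)) = inv_coef beta r.+1 *: E (i, j))
      /\ (forall y : U, exists x : OY, phi x = y))
  (* (i) embedding U(gl_n) -> OY, E_ij |-> t~^{(1)}_ij *)
  /\ (exists psi : {lrmorphism U -> OY},
      (forall i j : 'I_n, psi (E (i, j)) = tOY (i, j, 0%N))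
      /\ injective psi)
  (* (ii) homomorphism OY -> Y, T~(u) |-> T(u + beta/u) *)
  /\ (exists chi : {lrmorphism OY -> Y},
      forall (i j : 'I_n) (r : nat), chi (tOY (i, j, r)) = Yexp beta ty i j r.+1)
  (* (iii)(a) T~(u) |-> f(u) T~(u) is an automorphism *)
  /\ (forall f : nat -> CC, f 0%N = 1 ->
      exists alpha : {lrmorphism OY -> OY},
        (forall (i j : 'I_n) (r : nat), alpha (tOY (i, j, r)) = fmul tOY f i j r.+1)
        /\ bijective alpha)
  (* (iii)(b) T~(u) |-> B T~(u) B^{-1} is an automorphism *)
  /\ (forall B : 'M[CC]_n, B \in unitmx ->
      exists alpha : {lrmorphism OY -> OY},
        (forall (i j : 'I_n) (r : nat), alpha (tOY (i, j, r)) = conjT tOY B i j r.+1)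
        /\ bijective alpha).
Proof.
have [psi psiE] := presents_lift HU (OY_rel_U_rel HOY.1).
have [phi phiE] := subst_hom HOY (fun i j => erefl) (OY_coef_rel_eval HU.1).
have [chi chiE] := subst_hom HOY (fun i j => erefl) (Y_rel_OY_coef_rel0 HY.1).
have phiK : cancel psi phi.
  apply: (presents_endo_id HU (a := phi \o psi)) => -[i j] /=.
  by rewrite psiE (phiE i j 1%N) kmap_subst_eval scale1r.
split; [|split; [|split; [|split]]].
- exists phi; split=> [i j r|y]; last by exists (psi y); rewrite phiK.
  by rewrite (phiE i j r.+1) kmap_subst_eval.
- by exists psi; split=> //; apply: can_inj phiK.
- by exists chi => i j r; rewrite (chiE i j r.+1) Yexp_kmap.
- exact: mul_series_automorphism HOY.
- exact: conj_automorphism HOY.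
Qed.
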